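(* There is a universal constant $c>0$ such that for every $m\ge2$, every $T\ge K\ge4$ (with $m\le K$), and every multi-dueling bandit algorithm, there exists an oblivious sequence of preference matrices $P_1,\dots,P_T$ on $[K]$ with a common Condorcet winner $a^\star$ (i.e. $P_t(a^\star,i)\ge1/2$ for all $i,t$) such that $\mathbb{E}[R_T^{\mathrm C}]\ge c\sqrt{KT}$.
   Context: A preference matrix on $[K]$ is $P\in[0,1]^{K\times K}$ with $P(i,j)+P(j,i)=1$, $P(i,i)=1/2$. Multi-dueling bandit protocol: at each round $t\in[T]$ the learner, based on past observations and internal randomness, selects a multiset $\mathcal{A}_t\subseteq[K]$ of size $m$ (elements listed $\mathcal{A}_t(1),\dots,\mathcal{A}_t(m)$) and observes only a winning index $I_t\in[m]$ drawn with probability $\Pr[I_t=i]=\sum_{j\ne i}\frac{2P_t(\mathcal{A}_t(i),\mathcal{A}_t(j))}{m(m-1)}$. Oblivious means the sequence $P_1,\dots,P_T$ is fixed in advance. Condorcet regret: $R_T^{\mathrm C}=\sum_{t=1}^T\frac1m\sum_{j=1}^m\Delta_t(\mathcal{A}_t(j))$ with $\Delta_t(i)=P_t(a^\star,i)-\tfrac12$. *)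

From HB Require Import structures.
From mathcomp Require Import all_boot all_order all_algebra.
From mathcomp Require Import Rstruct.
Set Implicit Arguments. Unset Strict Implicit. Unset Printing Implicit Defensive.
Import Order.TTheory GRing.Theory Num.Theory.
Local Open Scope ring_scope.

Notation R := Rdefinitions.R.

Definition pref (K : nat) := 'I_K -> 'I_K -> R.

Definition is_pref_matrix (K : nat) (P : pref K) : Prop :=
  (forall i j, 0 <= P i j <= 1) /\
  (forall i j, P i j + P j i = 1) /\
  (forall i, P i i = 1 / 2%:R).

(* An action: a multiset of size m, listed as A(1),...,A(m). *)
Definition action (m K : nat) := {ffun 'I_m -> 'I_K}.

Definition win_prob (m K : nat) (P : pref K) (A : action m K) (i : 'I_m) : R :=
  \sum_(j < m | j != i) (2%:R * P (A i) (A j)) / (m * (m - 1))%:R.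

Definition history (m K : nat) := seq (action m K * 'I_m)%type.

(* A (randomized) algorithm, as a behavioral strategy: after history h it picks
   the next multiset according to the distribution (policy h). *)
Definition policy (m K : nat) := history m K -> {ffun action m K -> R}.

Definition is_distribution (X : finType) (d : {ffun X -> R}) : Prop :=
  (forall x, 0 <= d x) /\ \sum_x d x = 1.

Definition valid_policy (m K : nat) (pol : policy m K) : Prop :=
  forall h, is_distribution (pol h).

Definition trajectory (m K T : nat) := {ffun 'I_T -> (action m K * 'I_m)%type}.

Definition prefix (m K T : nat) (tr : trajectory m K T) (t : 'I_T) : history m K :=
  [seq tr s | s : 'I_T <- enum 'I_T & ltn s t].

Definition traj_prob (m K T : nat) (pol : policy m K) (Ps : 'I_T -> pref K)
    (tr : trajectory m K T) : R :=
  \prod_(t < T) (pol (prefix tr t) (tr t).1 * win_prob (Ps t) (tr t).1 (tr t).2).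

Definition condorcet_regret (m K T : nat) (Ps : 'I_T -> pref K) (astar : 'I_K)
    (tr : trajectory m K T) : R :=
  \sum_(t < T) (1 / m%:R) * \sum_(j < m) (Ps t astar ((tr t).1 j) - 1 / 2%:R).

Definition expected_regret (m K T : nat) (pol : policy m K) (Ps : 'I_T -> pref K)
    (astar : 'I_K) : R :=
  \sum_(tr : trajectory m K T) traj_prob pol Ps tr * condorcet_regret Ps astar tr.

From Pilot Require Import Defs.
From Stdlib Require Import Reals.
From mathcomp Require Import all_boot all_order all_algebra.
From mathcomp Require Import Rstruct.
From mathcomp Require Import ring lra.
Set Implicit Arguments. Unset Strict Implicit. Unset Printing Implicit Defensive.
Import Order.TTheory GRing.Theory Num.Theory.
Local Open Scope ring_scope.

(* In the tie environment (all preferences 1/2) every round's winner is uniform,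
   so averaging over arms yields an arm j whose expected pull fraction phi is at
   most 1/K.  Plant j as Condorcet winner with margin e = sqrt(K T) / (16 T).  A
   round's winner probability w then satisfies M w >= 1/2, and under the uniform
   winner the mean of ln (M w) is at least -64 e^2 n / M when j fills n of the M
   slots; so the tie-expectation of the log-likelihood ratio is at least
   -64 e^2 T phi >= -1/4.  Jensen's inequality for ln, applied to the likelihood
   ratio times 2 - f (f the pull fraction of j), gives
   ln (1 + r) >= -1/4 + (1 - phi)/2 >= 1/8 with r the planted expectation of
   1 - f.  Hence r >= 1/8, and as every slot not filled by j costs e, the regret
   is e T r >= sqrt(K T) / 128. *)

Lemma lnM (x y : R) : 0 < x -> 0 < y -> ln (x * y) = ln x + ln y.
Proof. by move=> /RltP x_gt0 /RltP y_gt0; rewrite ln_mult. Qed.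

Lemma lnV (x : R) : 0 < x -> ln x^-1 = - ln x.
Proof. by move=> /RltP x_gt0; rewrite -RinvE ln_Rinv. Qed.

Lemma ln_prod (I : finType) (F : I -> R) :
  (forall i, 0 < F i) -> ln (\prod_i F i) = \sum_i ln (F i).
Proof.
move=> F_gt0.
suff [] : 0 < \prod_i F i /\ ln (\prod_i F i) = \sum_i ln (F i) by [].
apply: (big_ind2 (fun x s => 0 < x /\ ln x = s)) => //.
- by rewrite ln_1.
- by move=> x1 x2 s1 s2 [x1_gt0 <-] [x2_gt0 <-]; rewrite mulr_gt0 // lnM.
Qed.

Lemma ln_le_subr1 (x : R) : 0 < x -> ln x <= x - 1.
Proof.
move=> /RltP x_gt0; have /RleP := exp_ineq1_le (ln x).
by rewrite exp_ln // RplusE R1E; lra.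
Qed.

Lemma ln_ge_1_subV (x : R) : 0 < x -> 1 - x^-1 <= ln x.
Proof.
move=> x_gt0; have := @ln_le_subr1 x^-1; rewrite invr_gt0 => /(_ x_gt0).
by rewrite lnV //; lra.
Qed.

Lemma ln_ge_quadratic (x : R) : 2%:R^-1 <= x -> x - 1 - 2%:R * (x - 1) ^+ 2 <= ln x.
Proof.
move=> x_ge; have x_gt0 : 0 < x by lra.
apply: le_trans (ln_ge_1_subV x_gt0); rewrite -subr_ge0.
have -> : 1 - x^-1 - (x - 1 - 2%:R * (x - 1) ^+ 2) = (x - 1) ^+ 2 * (2%:R - x^-1).
  by field; rewrite gt_eqF.
rewrite mulr_ge0 ?sqr_ge0 // subr_ge0 -[2%:R]invrK lef_pV2 ?posrE ?invr_gt0 //; lra.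
Qed.

Lemma ln_two_subr_ge (f : R) : 0 <= f <= 1 -> (1 - f) / 2%:R <= ln (2%:R - f).
Proof.
move=> /andP[f_ge0 f_le1]; have h_gt0 : 0 < 2%:R - f by lra.
apply: le_trans (ln_ge_1_subV h_gt0); rewrite -subr_ge0.
have -> : 1 - (2%:R - f)^-1 - (1 - f) / 2%:R = (1 - f) * f / (2%:R * (2%:R - f)).
  by field; rewrite gt_eqF.
by rewrite divr_ge0 ?mulr_ge0 //; lra.
Qed.

Lemma jensen_ln (I : finType) (p x : I -> R) :
  (forall i, 0 <= p i) -> \sum_i p i = 1 -> (forall i, 0 < x i) ->
  \sum_i p i * ln (x i) <= ln (\sum_i p i * x i).
Proof.
move=> p_ge0 p_sum1 x_gt0; set Z := \sum_i p i * x i.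
have px_ge0 i : 0 <= p i * x i by rewrite mulr_ge0 // ltW.
have Z_gt0 : 0 < Z.
  rewrite lt_def sumr_ge0 // andbT; apply/eqP => Z0.
  have p0 i : p i = 0.
    have /eqP := psumr_eq0P (fun i _ => px_ge0 i) Z0 (i := i) isT.
    by rewrite mulf_eq0 (gt_eqF (x_gt0 i)) orbF => /eqP.
  by move: p_sum1; rewrite big1 // => /esym/eqP; rewrite oner_eq0.
suff : \sum_i p i * ln (x i / Z) <= 0.
  rewrite (eq_bigr (fun i => p i * ln (x i) - p i * ln Z)) => [|i _].
    by rewrite sumrB -mulr_suml p_sum1 mul1r subr_le0.
  by rewrite lnM ?invr_gt0 // lnV // mulrBr.
apply: le_trans (_ : \sum_i p i * (x i / Z - 1) <= 0).
  by apply: ler_sum => i _; rewrite ler_wpM2l // ln_le_subr1 // divr_gt0.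
rewrite (eq_bigr (fun i => p i * x i / Z - p i)) => [|i _]; last by rewrite mulrBr mulr1 mulrA.
by rewrite sumrB -mulr_suml divff ?gt_eqF // p_sum1 subrr.
Qed.

Lemma win_prob_ge0 m K (P : pref K) (a : action m K) i :
  is_pref_matrix P -> 0 <= win_prob P a i.
Proof.
move=> [P01 _]; apply: sumr_ge0 => j _; rewrite divr_ge0 // mulr_ge0 //.
by case/andP: (P01 (a i) (a j)).
Qed.

(* Each unordered pair of slots contributes [P x y + P y x = 1] to the total. *)
Lemma win_prob_sum1 m K (P : pref K) (a : action m K) : (2 <= m)%N ->
  is_pref_matrix P -> \sum_i win_prob P a i = 1.
Proof.
move=> m_ge2 [_ [P_compl _]].
set S := \sum_i \sum_(j | j != i) P (a i) (a j).
have S_swap : S = \sum_i \sum_(j | j != i) P (a j) (a i).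
  rewrite /S (exchange_big_dep xpredT) //=; apply: eq_bigr => i _.
  by apply: eq_bigl => j; rewrite eq_sym.
have S2 : S + S = (m * (m - 1))%:R.
  rewrite {2}S_swap -big_split /= (eq_bigr (fun _ => (m - 1)%:R)) => [|i _].
    by rewrite sumr_const card_ord natrM mulrC mulr_natr.
  rewrite -big_split /= (eq_bigr (fun _ => 1)) => [|j _]; last exact: P_compl.
  by rewrite sumr_const cardC1 card_ord subn1.
have D_neq0 : ((m * (m - 1))%:R : R) != 0.
  by rewrite pnatr_eq0 muln_eq0 negb_or -!lt0n subn_gt0 (leq_trans _ m_ge2).
rewrite /win_prob (eq_bigr (fun i =>
  2%:R * (\sum_(j | j != i) P (a i) (a j)) / (m * (m - 1))%:R)) => [|i _].
  by rewrite -mulr_suml -mulr_sumr -/S mulr_natl mulr2n S2 divff.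
by rewrite mulr_sumr mulr_suml.
Qed.

Section Trajectories.
Variables (m K : nat) (pol : policy m K).
Hypotheses (m_ge2 : (2 <= m)%N) (pol_valid : valid_policy pol).
Local Notation round := (action m K * 'I_m)%type.

Definition rcons_traj T (tr : trajectory m K T) (x : round) : trajectory m K T.+1 :=
  [ffun s => if unlift ord_max s is Some s' then tr s' else x].

Definition traj_history T (tr : trajectory m K T) : history m K := map tr (enum 'I_T).

Definition round_prob (P : pref K) (h : history m K) (x : round) :=
  pol h x.1 * win_prob P x.1 x.2.

Lemma rcons_traj_widen T (tr : trajectory m K T) x s :
  rcons_traj tr x (widen_ord (leqnSn T) s) = tr s.
Proof.
have -> : widen_ord (leqnSn T) s = lift ord_max s.
  by apply: val_inj; rewrite /= /bump leqNgt ltn_ord.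
by rewrite ffunE liftK.
Qed.

Lemma rcons_traj_max T (tr : trajectory m K T) x : rcons_traj tr x ord_max = x.
Proof. by rewrite ffunE unlift_none. Qed.

Lemma sum_traj_rcons T (F : trajectory m K T.+1 -> R) :
  \sum_tr F tr = \sum_(tr : trajectory m K T) \sum_(x : round) F (rcons_traj tr x).
Proof.
rewrite pair_big /= (reindex (fun p => rcons_traj p.1 p.2)) //.
exists (fun tr : trajectory m K T.+1 =>
  ([ffun s => tr (widen_ord (leqnSn T) s)] : trajectory m K T, tr ord_max)).
  move=> [tr x] _; rewrite rcons_traj_max; congr pair.
  by apply/ffunP => s; rewrite ffunE rcons_traj_widen.
move=> tr _; apply/ffunP => s; rewrite ffunE /=.
case: unliftP => [s' ->|->] //; rewrite ffunE; congr (tr _).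
by apply: val_inj; rewrite /= /bump leqNgt ltn_ord.
Qed.

Lemma filter_enum_ord_widen n t : (t <= n)%N ->
  [seq u : 'I_n.+1 <- enum 'I_n.+1 | ltn u t] =
  map (widen_ord (leqnSn n)) [seq u : 'I_n <- enum 'I_n | ltn u t].
Proof.
move=> t_le_n; rewrite enum_ordSr filter_rcons /= ltnNge t_le_n /=.
by rewrite filter_map.
Qed.

Lemma prefix_rcons_traj_widen T (tr : trajectory m K T) x s :
  Defs.prefix (rcons_traj tr x) (widen_ord (leqnSn T) s) = Defs.prefix tr s.
Proof.
rewrite /Defs.prefix filter_enum_ord_widen ?(ltnW (ltn_ord s)) // -map_comp.
by apply: eq_map => u /=; rewrite rcons_traj_widen.
Qed.

Lemma prefix_rcons_traj_max T (tr : trajectory m K T) x :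
  Defs.prefix (rcons_traj tr x) ord_max = traj_history tr.
Proof.
rewrite /Defs.prefix filter_enum_ord_widen // -map_comp (@eq_in_filter _ _ predT) => [|u _];
  last exact: ltn_ord.
by rewrite filter_predT; apply: eq_map => u /=; rewrite rcons_traj_widen.
Qed.

Lemma traj_prob_rcons T (Ps : 'I_T.+1 -> pref K) (tr : trajectory m K T) x :
  traj_prob pol Ps (rcons_traj tr x) =
  traj_prob pol (Ps \o widen_ord (leqnSn T)) tr * round_prob (Ps ord_max) (traj_history tr) x.
Proof.
rewrite /traj_prob big_ord_recr /= prefix_rcons_traj_max rcons_traj_max; congr (_ * _).
by apply: eq_bigr => s _; rewrite prefix_rcons_traj_widen rcons_traj_widen.
Qed.

Lemma sum_round (F : round -> R) : \sum_x F x = \sum_a \sum_i F (a, i).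
Proof. by rewrite pair_bigA; apply: eq_bigr => -[]. Qed.

Lemma sum_round_prob P h : is_pref_matrix P -> \sum_x round_prob P h x = 1.
Proof.
move=> P_pref; rewrite -(proj2 (pol_valid h)) sum_round; apply: eq_bigr => a _.
by rewrite /round_prob /= -mulr_sumr win_prob_sum1 ?mulr1.
Qed.

Lemma sum_round_prob_win_mean P h (G : action m K -> 'I_m -> R) : is_pref_matrix P ->
  \sum_x round_prob P h x * (\sum_i win_prob P x.1 i * G x.1 i) =
  \sum_x round_prob P h x * G x.1 x.2.
Proof.
move=> P_pref; rewrite !sum_round; apply: eq_bigr => a _; rewrite /round_prob /=.
rewrite -big_distrl /= -mulr_sumr win_prob_sum1 // mulr1 mulr_sumr.
by apply: eq_bigr => i _; rewrite mulrA.
Qed.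

Lemma sum_rcons_traj T (tr : trajectory m K T) x (F : 'I_T.+1 -> round -> R) :
  \sum_t F t (rcons_traj tr x t) = \sum_(t < T) F (widen_ord (leqnSn T) t) (tr t) + F ord_max x.
Proof.
rewrite big_ord_recr /= rcons_traj_max; congr (_ + _).
by apply: eq_bigr => t _; rewrite rcons_traj_widen.
Qed.

Lemma expect_traj_rcons T (Ps : 'I_T.+1 -> pref K) (F : trajectory m K T.+1 -> R)
    (Phi : trajectory m K T -> R) (Psi : round -> R) :
  is_pref_matrix (Ps ord_max) -> (forall tr x, F (rcons_traj tr x) = Phi tr + Psi x) ->
  \sum_tr traj_prob pol Ps tr * F tr =
  \sum_tr traj_prob pol (Ps \o widen_ord (leqnSn T)) tr *
    (Phi tr + \sum_x round_prob (Ps ord_max) (traj_history tr) x * Psi x).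
Proof.
move=> P_pref F_rcons; rewrite sum_traj_rcons; apply: eq_bigr => tr _.
under eq_bigr do rewrite F_rcons traj_prob_rcons -mulrA mulrDr.
by rewrite -mulr_sumr big_split /= -mulr_suml sum_round_prob // mul1r mulrDr.
Qed.

Lemma traj_prob_ge0 T (Ps : 'I_T -> pref K) tr :
  (forall t, is_pref_matrix (Ps t)) -> 0 <= traj_prob pol Ps tr.
Proof.
move=> Ps_pref; apply: prodr_ge0 => t _.
by rewrite mulr_ge0 ?win_prob_ge0 ?(proj1 (pol_valid _)).
Qed.

Lemma traj_prob_sum1 T (Ps : 'I_T -> pref K) :
  (forall t, is_pref_matrix (Ps t)) -> \sum_tr traj_prob pol Ps tr = 1.
Proof.
elim: T Ps => [|T IH] Ps Ps_pref.
  rewrite (eq_bigr (fun _ => 1)) => [|tr _]; last by rewrite /traj_prob big_ord0.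
  by rewrite sumr_const card_ffun card_ord expn0.
rewrite -[LHS](eq_bigr _ (fun tr _ => mulr1 _)).
rewrite (expect_traj_rcons (Phi := fun _ => 1) (Psi := fun _ => 0)) // => [|tr x];
  last by rewrite addr0.
rewrite -[RHS](IH (Ps \o widen_ord (leqnSn T))) => [|t]; last exact: Ps_pref.
by apply: eq_bigr => tr _; rewrite big1 ?addr0 ?mulr1 // => x _; rewrite mulr0.
Qed.

Lemma expect_sum_win_mean T (Ps : 'I_T -> pref K) (G : action m K -> 'I_m -> R) :
  (forall t, is_pref_matrix (Ps t)) ->
  \sum_tr traj_prob pol Ps tr * \sum_t G (tr t).1 (tr t).2 =
  \sum_tr traj_prob pol Ps tr * \sum_t \sum_i win_prob (Ps t) (tr t).1 i * G (tr t).1 i.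
Proof.
elim: T Ps => [|T IH] Ps Ps_pref.
  by apply: eq_bigr => tr _; rewrite !big_ord0.
rewrite (expect_traj_rcons (Phi := fun tr => \sum_t G (tr t).1 (tr t).2)
  (Psi := fun x => G x.1 x.2)) // => [|tr x]; last first.
  exact: (sum_rcons_traj tr x (fun _ y => G y.1 y.2)).
rewrite (expect_traj_rcons
  (Phi := fun tr => \sum_t \sum_i win_prob (Ps (widen_ord (leqnSn T) t)) (tr t).1 i * G (tr t).1 i)
  (Psi := fun x => \sum_i win_prob (Ps ord_max) x.1 i * G x.1 i)) //
  => [|tr x]; last first.
  exact: (sum_rcons_traj tr x (fun t y => \sum_i win_prob (Ps t) y.1 i * G y.1 i)).
rewrite !(eq_bigr _ (fun tr _ => mulrDr _ _ _)) !big_split /= IH => [|t]; last exact: Ps_pref.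
congr (_ + _); apply: eq_bigr => tr _; rewrite sum_round_prob_win_mean //.
Qed.

End Trajectories.

Definition tie_pref K : pref K := fun _ _ => 1 / 2%:R.
Arguments tie_pref {K}.

Definition planted_pref K (j : 'I_K) (e : R) : pref K :=
  fun i k => 1 / 2%:R + e * ((i == j)%:R - (k == j)%:R).

Definition arm_count m K (j : 'I_K) (a : action m K) : R := \sum_s (a s == j)%:R.

Lemma tie_pref_is_pref K : is_pref_matrix (@tie_pref K).
Proof. by split=> [i k|]; [|split=> [i k|i]]; rewrite /tie_pref //; lra. Qed.

Lemma planted_pref_is_pref K (j : 'I_K) e :
  0 <= e -> e <= 1 / 2%:R -> is_pref_matrix (planted_pref j e).
Proof.
move=> e_ge0 e_le; split=> [i k|]; last split=> [i k|i]; rewrite /planted_pref.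
- by case: (i == j); case: (k == j); rewrite /= ?subrr ?subr0 ?sub0r ?mulr0 ?mulr1 ?mulrN1;
    apply/andP; split; lra.
- by field.
- by rewrite subrr mulr0 addr0.
Qed.

Lemma planted_pref_winner K (j : 'I_K) e i : 0 <= e -> 1 / 2%:R <= planted_pref j e j i.
Proof.
by move=> e_ge0; rewrite /planted_pref eqxx lerDl mulr_ge0 // subr_ge0; case: (i == j).
Qed.

Lemma win_prob_tie m K (a : action m K) i : (2 <= m)%N -> win_prob tie_pref a i = m%:R^-1.
Proof.
move=> m_ge2; rewrite /win_prob /tie_pref sumr_const cardC1 card_ord -subn1 natrM.
have m_neq0 : (m%:R : R) != 0 by rewrite pnatr_eq0 -lt0n (leq_trans _ m_ge2).
have m1_neq0 : ((m - 1)%:R : R) != 0 by rewrite pnatr_eq0 subn_eq0 -ltnNge.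
by rewrite -mulr_natr; field; rewrite m_neq0 m1_neq0.
Qed.

Section Planted.
Variables (m K : nat) (j : 'I_K) (e : R).
Hypothesis m_ge2 : (2 <= m)%N.
Local Notation M := (m%:R : R).
Local Notation w a i := (win_prob (planted_pref j e) a i).
Local Notation d a i := (((a : action m K) i == j)%:R : R).

Lemma arm_count_ge0 (a : action m K) : 0 <= arm_count j a.
Proof. by apply: sumr_ge0 => s _; rewrite ler0n. Qed.

Lemma arm_count_le (a : action m K) : arm_count j a <= M.
Proof.
have d_le1 s : d a s <= 1 by rewrite lern1 leq_b1.
by rewrite (le_trans (ler_sum _ (fun s _ => d_le1 s))) // sumr_const card_ord.
Qed.

Lemma arm_count_others (a : action m K) i : \sum_(k | k != i) d a k = arm_count j a - d a i.
Proof. by rewrite /arm_count [in RHS](bigD1 i) //= addrC addrK. Qed.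

Lemma arm_count_others_le (a : action m K) i : arm_count j a - d a i <= M - 1.
Proof.
have d_le1 s : d a s <= 1 by rewrite lern1 leq_b1.
rewrite -arm_count_others (le_trans (ler_sum _ (fun s _ => d_le1 s))) //.
by rewrite sumr_const cardC1 card_ord -subn1 natrB ?(leq_trans _ m_ge2).
Qed.

Lemma win_prob_planted (a : action m K) i :
  M * w a i = 1 + 2%:R * e * (M * d a i - arm_count j a) / (M - 1).
Proof.
have M_neq0 : M != 0 by rewrite pnatr_eq0 -lt0n (leq_trans _ m_ge2).
have M1_neq0 : M - 1 != 0 by rewrite subr_eq0 pnatr_eq1 gtn_eqF.
rewrite /win_prob (eq_bigr (fun k => (1 + 2%:R * e * d a i - 2%:R * e * d a k) / (m * (m - 1))%:R))
  => [|k _]; last by rewrite /planted_pref; congr (_ * _); field.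
rewrite -mulr_suml sumrB sumr_const cardC1 card_ord -mulr_sumr arm_count_others.
rewrite -subn1 -[_ *+ (m - 1)]mulr_natr natrM natrB ?(leq_trans _ m_ge2) //.
by field; rewrite M_neq0 M1_neq0.
Qed.

Lemma win_prob_planted_ge (a : action m K) i :
  0 <= e -> e <= 1 / 4%:R -> 2%:R^-1 <= M * w a i.
Proof.
move=> e_ge0 e_le.
have M1_gt0 : 0 < M - 1 by rewrite subr_gt0 ltr1n.
have dev_ge : - (M - 1) <= M * d a i - arm_count j a.
  have := arm_count_others_le a i.
  have : 0 <= (M - 1) * d a i by rewrite mulr_ge0 ?ler0n // ltW.
  lra.
have : - (2%:R * e) <= 2%:R * e * (M * d a i - arm_count j a) / (M - 1).
  by rewrite ler_pdivlMr // mulNr -mulrN; apply: ler_wpM2l; lra.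
by rewrite win_prob_planted; lra.
Qed.

Lemma sum_sqr_win_planted_dev (a : action m K) :
  \sum_i (M * w a i - 1) ^+ 2 <= 32%:R * e ^+ 2 * arm_count j a.
Proof.
set n := arm_count j a; set c := (2%:R * e / (M - 1)) ^+ 2.
have M_ge2 : 2%:R <= M by rewrite ler_nat.
have n_ge0 : 0 <= n := arm_count_ge0 a.
have n_le : n <= M := arm_count_le a.
have dev_sqr_le i : (M * d a i - n) ^+ 2 <= M ^+ 2 * d a i + M * n.
  have : 0 <= n * (M - n) by rewrite mulr_ge0 // subr_ge0.
  have : 0 <= M * n by rewrite mulr_ge0 // ler0n.
  by case: (a i == j); rewrite /= ?mulr0 ?mulr1 ?sub0r ?sqrrN ?add0r expr2 ?expr2; nra.
apply: le_trans (_ : \sum_i c * (M ^+ 2 * d a i + M * n) <= _).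
  apply: ler_sum => i _; rewrite win_prob_planted addrC addKr -/n mulrAC exprMn.
  by rewrite ler_wpM2l ?sqr_ge0.
rewrite -mulr_sumr big_split /= -mulr_sumr sumr_const card_ord -/(arm_count j a) -/n.
rewrite -[M * n *+ m]mulr_natr /c -subr_ge0.
have -> : 32%:R * e ^+ 2 * n - (2%:R * e / (M - 1)) ^+ 2 * (M ^+ 2 * n + M * n * M) =
    8%:R * e ^+ 2 * n * ((M - 2%:R) * (3%:R * M - 2%:R)) / (M - 1) ^+ 2.
  by field; rewrite subr_eq0 pnatr_eq1 gtn_eqF.
have : 0 <= (M - 2%:R) * (3%:R * M - 2%:R) by rewrite mulr_ge0 //; lra.
by move=> ?; rewrite divr_ge0 ?sqr_ge0 // mulr_ge0 // mulr_ge0 // mulr_ge0 ?sqr_ge0.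
Qed.

Lemma sum_ln_win_planted (a : action m K) : 0 <= e -> e <= 1 / 4%:R ->
  - (64%:R * e ^+ 2 * arm_count j a) <= \sum_i ln (M * w a i).
Proof.
move=> e_ge0 e_le.
apply: le_trans (ler_sum _ (fun i _ => ln_ge_quadratic (win_prob_planted_ge a i e_ge0 e_le))).
have P_pref : is_pref_matrix (planted_pref j e) by apply: planted_pref_is_pref => //; lra.
rewrite sumrB sumrB -mulr_sumr win_prob_sum1 // mulr1 sumr_const card_ord subrr sub0r -mulr_sumr.
by rewrite lerN2; have := sum_sqr_win_planted_dev a; lra.
Qed.

End Planted.

Lemma sum_arm_count m K (a : action m K) : \sum_j arm_count j a = m%:R.
Proof.
rewrite /arm_count exchange_big /= -[m in RHS]card_ord -sumr_const; apply: eq_bigr => s _.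
by rewrite (bigD1 (a s)) //= eqxx big1 ?addr0 // => k; rewrite eq_sym => /negbTE ->.
Qed.

Definition planted_margin (K T : nat) := Num.sqrt ((K * T)%:R : R) / (16%:R * T%:R).

Lemma planted_margin_ge0 K T : 0 <= planted_margin K T.
Proof. by rewrite divr_ge0 ?sqrtr_ge0 ?mulr_ge0 ?ler0n. Qed.

Lemma planted_margin_sqr K T : (0 < T)%N -> planted_margin K T ^+ 2 = K%:R / (256%:R * T%:R).
Proof.
move=> T_gt0; have T_neq0 : (T%:R : R) != 0 by rewrite pnatr_eq0 -lt0n.
by rewrite expr_div_n sqr_sqrtr ?ler0n // natrM; field.
Qed.

Lemma planted_margin_le K T : (0 < T)%N -> (K <= T)%N -> planted_margin K T <= 1 / 4%:R.
Proof.
move=> T_gt0 K_le_T; have KT : (K%:R : R) <= T%:R by rewrite ler_nat.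
have T_ge0 : 0 <= (T%:R : R) := ler0n _ _; have e_ge0 := planted_margin_ge0 K T.
have : planted_margin K T ^+ 2 <= 1 / 16%:R.
  by rewrite planted_margin_sqr // ler_pdivrMr ?mulr_gt0 ?ltr0n //; lra.
by rewrite expr2; nra.
Qed.

Section LowerBound.
Variables (m K T : nat) (pol : policy m K).
Hypotheses (m_ge2 : (2 <= m)%N) (T_gt0 : (0 < T)%N) (pol_valid : valid_policy pol).
Local Notation M := (m%:R : R).

Let M_neq0 : M != 0. Proof. by rewrite pnatr_eq0 -lt0n (leq_trans _ m_ge2). Qed.
Let T_neq0 : (T%:R : R) != 0. Proof. by rewrite pnatr_eq0 -lt0n. Qed.

Definition traj_expect (Ps : 'I_T -> pref K) (X : trajectory m K T -> R) : R :=
  \sum_tr traj_prob pol Ps tr * X tr.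

Definition pulls (j : 'I_K) (tr : trajectory m K T) : R := \sum_t arm_count j (tr t).1.

Definition pull_frac (j : 'I_K) (tr : trajectory m K T) := pulls j tr / (M * T%:R).

Section Expectation.
Variable Ps : 'I_T -> pref K.
Hypothesis Ps_pref : forall t, is_pref_matrix (Ps t).

Lemma traj_expectD X Y :
  traj_expect Ps (fun tr => X tr + Y tr) = traj_expect Ps X + traj_expect Ps Y.
Proof. by rewrite -big_split; apply: eq_bigr => tr _; rewrite mulrDr. Qed.

Lemma traj_expectZ c X : traj_expect Ps (fun tr => c * X tr) = c * traj_expect Ps X.
Proof. by rewrite /traj_expect mulr_sumr; apply: eq_bigr => tr _; rewrite mulrCA. Qed.

Lemma traj_expect_cst c : traj_expect Ps (fun _ => c) = c.
Proof. by rewrite /traj_expect -mulr_suml traj_prob_sum1 ?mul1r. Qed.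

Lemma ler_traj_expect X Y : (forall tr, X tr <= Y tr) -> traj_expect Ps X <= traj_expect Ps Y.
Proof. by move=> XY; apply: ler_sum => tr _; rewrite ler_wpM2l ?traj_prob_ge0. Qed.

Lemma traj_expect_ge0 X : (forall tr, 0 <= X tr) -> 0 <= traj_expect Ps X.
Proof. by move=> X_ge0; apply: sumr_ge0 => tr _; rewrite mulr_ge0 ?traj_prob_ge0. Qed.

End Expectation.

Lemma pull_frac_ge0 j tr : 0 <= pull_frac j tr.
Proof.
by rewrite divr_ge0 ?mulr_ge0 ?ler0n //; apply: sumr_ge0 => t _; apply: arm_count_ge0.
Qed.

Lemma pull_frac_le1 j tr : pull_frac j tr <= 1.
Proof.
rewrite ler_pdivrMr ?mul1r ?mulr_gt0 ?ltr0n ?(leq_trans _ m_ge2) //.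
rewrite (le_trans (ler_sum _ (fun t _ => arm_count_le j (tr t).1))) //.
by rewrite sumr_const card_ord -[M *+ T]mulr_natr.
Qed.

Lemma sum_pull_frac tr : \sum_j pull_frac j tr = 1.
Proof.
rewrite -mulr_suml /pulls exchange_big /= (eq_bigr (fun _ => M)) => [|t _];
  last exact: sum_arm_count.
by rewrite sumr_const card_ord -[M *+ T]mulr_natr divff // mulf_neq0.
Qed.

Lemma exists_rarely_pulled Ps : (0 < K)%N -> (forall t, is_pref_matrix (Ps t)) ->
  exists j, traj_expect Ps (pull_frac j) * K%:R <= 1.
Proof.
move=> K_gt0 Ps_pref.
have [j _ j_min] :=
  @arg_minP _ R _ (Ordinal K_gt0) xpredT (fun k => traj_expect Ps (pull_frac k)) isT.
exists j; have sum_frac : \sum_k traj_expect Ps (pull_frac k) = 1.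
  rewrite exchange_big /= -[RHS](traj_expect_cst Ps_pref); apply: eq_bigr => tr _.
  by rewrite -mulr_sumr sum_pull_frac.
rewrite -[X in _ <= X]sum_frac mulr_natr -[K in _ *+ K]card_ord -sumr_const.
by apply: ler_sum => k _; apply: j_min.
Qed.

Lemma condorcet_regret_planted j e tr :
  condorcet_regret (fun _ => planted_pref j e) j tr = e * T%:R * (1 - pull_frac j tr).
Proof.
rewrite /condorcet_regret (eq_bigr (fun t => e - e / M * arm_count j (tr t).1)) => [|t _].
  rewrite sumrB sumr_const card_ord -mulr_sumr /pull_frac -/(pulls j tr) -[e *+ T]mulr_natr.
  by field; rewrite M_neq0 T_neq0.
rewrite (eq_bigr (fun s => e - e * ((tr t).1 s == j)%:R)) => [|s _]; last first.
  by rewrite /planted_pref eqxx /=; field.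
rewrite sumrB sumr_const card_ord -mulr_sumr -/(arm_count j (tr t).1) -mulr_natr.
by field.
Qed.

Lemma traj_prob_planted j e (tr : trajectory m K T) :
  traj_prob pol (fun _ => planted_pref j e) tr =
  traj_prob pol (fun _ => tie_pref) tr *
    \prod_t (M * win_prob (planted_pref j e) (tr t).1 (tr t).2).
Proof.
rewrite /traj_prob -big_split; apply: eq_bigr => t _ /=.
by rewrite win_prob_tie //; field.
Qed.

Local Notation E0 := (traj_expect (fun _ => tie_pref)).
Local Notation log_lik j e tr :=
  (\sum_t ln (M * win_prob (planted_pref j e) (tr t).1 (tr t).2)).

Lemma expect_tie_log_lik j e : 0 <= e -> e <= 1 / 4%:R ->
  - (64%:R * e ^+ 2 * T%:R) * E0 (pull_frac j) <= E0 (fun tr => log_lik j e tr).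
Proof.
move=> e_ge0 e_le.
have -> : E0 (fun tr => log_lik j e tr) = E0 (fun tr => \sum_t \sum_i
    win_prob tie_pref (tr t).1 i * ln (M * win_prob (planted_pref j e) (tr t).1 i)).
  exact: (expect_sum_win_mean m_ge2 pol_valid
    (fun a i => ln (M * win_prob (planted_pref j e) a i)) (fun t => tie_pref_is_pref K)).
rewrite -traj_expectZ; apply: ler_traj_expect => [t|tr]; first exact: tie_pref_is_pref.
rewrite /pull_frac /pulls mulr_suml mulr_sumr; apply: ler_sum => t _.
under eq_bigr do rewrite win_prob_tie //.
have -> : - (64%:R * e ^+ 2 * T%:R) * (arm_count j (tr t).1 / (M * T%:R)) =
    M^-1 * - (64%:R * e ^+ 2 * arm_count j (tr t).1).
  by field; rewrite M_neq0 T_neq0.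
by rewrite -mulr_sumr ler_wpM2l ?invr_ge0 ?ler0n // sum_ln_win_planted.
Qed.

Local Notation Ej j e := (traj_expect (fun _ => planted_pref j e)).

Lemma planted_expect_unpulled_ge j e : 0 <= e -> e <= 1 / 4%:R ->
  - (64%:R * e ^+ 2 * T%:R) * E0 (pull_frac j) + (1 - E0 (pull_frac j)) / 2%:R <=
  Ej j e (fun tr => 1 - pull_frac j tr).
Proof.
move=> e_ge0 e_le.
have tie_pref_K := tie_pref_is_pref K.
have planted_pref_j : is_pref_matrix (planted_pref j e).
  by apply: planted_pref_is_pref => //; lra.
set f := pull_frac j; set r := Ej j e (fun tr => 1 - f tr).
pose rho (tr : trajectory m K T) := \prod_t (M * win_prob (planted_pref j e) (tr t).1 (tr t).2).
have Mw_gt0 (a : action m K) i : 0 < M * win_prob (planted_pref j e) a i.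
  apply: lt_le_trans (win_prob_planted_ge j m_ge2 a i e_ge0 e_le).
  by rewrite invr_gt0 ltr0n.
have rho_gt0 tr : 0 < rho tr by apply: prodr_gt0 => t _.
have f01 tr : 0 <= f tr <= 1 by rewrite pull_frac_ge0 pull_frac_le1.
have h_gt0 tr : 0 < 2%:R - f tr by have /andP[] := f01 tr; lra.
have r_ge0 : 0 <= r.
  by apply: traj_expect_ge0 => // tr; have /andP[] := f01 tr; lra.
have tie_sum1 := traj_prob_sum1 m_ge2 pol_valid (fun _ : 'I_T => tie_pref_K).
have planted_sum1 := traj_prob_sum1 m_ge2 pol_valid (fun _ : 'I_T => planted_pref_j).
have jensen := jensen_ln (fun tr => traj_prob_ge0 pol_valid tr (fun _ => tie_pref_K)) tie_sum1
  (fun tr => mulr_gt0 (rho_gt0 tr) (h_gt0 tr)).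
have split_ln : \sum_tr traj_prob pol (fun _ => tie_pref) tr * ln (rho tr * (2%:R - f tr)) =
    E0 (fun tr => log_lik j e tr) + E0 (fun tr => ln (2%:R - f tr)).
  rewrite -traj_expectD; apply: eq_bigr => tr _.
  have := ln_prod (fun t => Mw_gt0 (tr t).1 (tr t).2).
  by rewrite lnM //; [rewrite /rho => ->|exact: h_gt0].
have ln_h_ge : (1 - E0 f) / 2%:R <= E0 (fun tr => ln (2%:R - f tr)).
  apply: le_trans (ler_traj_expect _ (fun tr => ln_two_subr_ge (f01 tr))) => [|t]; last first.
    exact: tie_pref_K.
  rewrite /traj_expect -[X in (X - _) / _]tie_sum1.
  by rewrite -sumrB mulr_suml; apply: ler_sum => tr _; rewrite [in X in _ <= X]mulrA mulrBr mulr1.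
have sum_h : \sum_tr traj_prob pol (fun _ => tie_pref) tr * (rho tr * (2%:R - f tr)) = 1 + r.
  rewrite /r /traj_expect -[X in X + _]planted_sum1.
  rewrite -big_split; apply: eq_bigr => tr _ /=.
  by rewrite mulrA -traj_prob_planted; ring.
have r1_gt0 : 0 < 1 + r by lra.
have := ln_le_subr1 r1_gt0; have := expect_tie_log_lik j e_ge0 e_le.
move: jensen; rewrite split_ln sum_h.
lra.
Qed.

Lemma expected_regret_planted j e :
  expected_regret pol (fun _ : 'I_T => planted_pref j e) j =
  e * T%:R * Ej j e (fun tr => 1 - pull_frac j tr).
Proof.
by rewrite -traj_expectZ; apply: eq_bigr => tr _; rewrite condorcet_regret_planted.
Qed.

Lemma expected_regret_planted_ge j : (4 <= K)%N -> (K <= T)%N -> E0 (pull_frac j) * K%:R <= 1 ->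
  1 / 128%:R * Num.sqrt (K * T)%:R <=
  expected_regret pol (fun _ : 'I_T => planted_pref j (planted_margin K T)) j.
Proof.
move=> K_ge4 K_le_T phi_rare; set e := planted_margin K T.
have e_ge0 : 0 <= e := planted_margin_ge0 K T.
have e_le : e <= 1 / 4%:R := planted_margin_le T_gt0 K_le_T.
have K4 : 4%:R <= (K%:R : R) by rewrite ler_nat.
have phi_ge0 : 0 <= E0 (pull_frac j).
  by apply: (traj_expect_ge0 (fun _ => tie_pref_is_pref K)) => tr; apply: pull_frac_ge0.
have := planted_expect_unpulled_ge j e_ge0 e_le.
rewrite expected_regret_planted (_ : 64%:R * e ^+ 2 * T%:R = K%:R / 4%:R); last first.
  by rewrite planted_margin_sqr //; field.
rewrite (_ : e * T%:R = Num.sqrt (K * T)%:R / 16%:R); last by rewrite /e /planted_margin; field.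
move: phi_ge0 phi_rare; set phi := E0 _; set r := Ej _ _ _ => phi_ge0 phi_rare r_ge.
have phi_K : 0 <= phi * (K%:R - 4%:R) by rewrite mulr_ge0 // subr_ge0.
have r_ge8 : 1 / 8%:R <= r by lra.
have s_ge0 : 0 <= Num.sqrt ((K * T)%:R : R) := sqrtr_ge0 _.
nra.
Qed.

End LowerBound.

Theorem theorem2 :
  exists c : R, 0 < c /\
  forall (m K T : nat), (2 <= m)%N -> (m <= K)%N -> (4 <= K)%N -> (K <= T)%N ->
  forall pol : policy m K, valid_policy pol ->
  exists (Ps : 'I_T -> pref K) (astar : 'I_K),
    (forall t, is_pref_matrix (Ps t)) /\
    (forall t i, 1 / 2%:R <= Ps t astar i) /\
    c * Num.sqrt (K * T)%:R <= expected_regret pol Ps astar.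
Proof.
exists (1 / 128%:R); split; first by rewrite divr_gt0 ?ltr0n.
move=> m K T m_ge2 _ K_ge4 K_le_T pol pol_valid.
have K_gt0 : (0 < K)%N by rewrite (leq_trans _ K_ge4).
have T_gt0 : (0 < T)%N := leq_trans K_gt0 K_le_T.
have e_ge0 := planted_margin_ge0 K T; have e_le := planted_margin_le T_gt0 K_le_T.
have [j j_rare] := exists_rarely_pulled m_ge2 T_gt0 pol_valid K_gt0 (fun _ => tie_pref_is_pref K).
exists (fun _ => planted_pref j (planted_margin K T)), j; split.
  by move=> t; apply: planted_pref_is_pref => //; lra.
split; first by move=> t i; apply: planted_pref_winner.
exact: expected_regret_planted_ge.
Qed.
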